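(* Let $q\in X^*\setminus\{e\}$ and let $\lambda_q$ be the largest positive real root of $\mathfrak{p}_q(t):=t^{|q|}-\sum_{v\in\sqrt[*]{P_q}}t^{|q|-|v|}$. There exist a constant $c_{q,1}>0$ and an $\omega$-word $\xi\in P_q^\omega$ (i.e. $\xi$ is quasiperiodic with quasiperiod $q$) such that $f(\xi,n)\ge c_{q,1}\lambda_q^n$ for all $n\in\mathbb{N}$.
   Context: $X$ is a finite alphabet with $|X|\ge2$; $X^*$ the finite words (empty word $e$), $X^\omega$ the infinite words, $X^n$ the words of length $n$. $w\sqsubseteq\eta$ means $w$ is a prefix of $\eta$, $w\sqsubset\eta$ a proper prefix. For a language $L$, $L^\omega:=\{w_1w_2\cdots: w_i\in L\setminus\{e\}\}$. An $\omega$-word $\xi$ is quasiperiodic with quasiperiod $q$ if for every $j\in\mathbb{N}$ there is a prefix $u_j\sqsubseteq\xi$ with $j-|q|<|u_j|\le j$ and $u_j\cdot q\sqsubseteq\xi$; these are exactly the elements of $P_q^\omega$. $f(\xi,n):=|\mathrm{infix}(\xi)\cap X^n|$ is the number of distinct factors of $\xi$ of length $n$. $P_q:=\{v: e\sqsubset v\sqsubseteq q\sqsubset v\cdot q\}$, and $\sqrt[*]{P_q}:=P_q\setminus(P_q^2\cdot P_q^* )$. *)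

From mathcomp Require Import all_boot.
From Stdlib Require Import Reals ClassicalEpsilon.

Set Implicit Arguments.
Unset Strict Implicit.
Unset Printing Implicit Defensive.

Section Words.
Variable X : finType.

Definition oword := nat -> X.

Definition asb (P : Prop) : bool :=
  if excluded_middle_informative P then true else false.

Definition oprefix (w : seq X) (xi : oword) : Prop :=
  w = mkseq xi (size w).

Definition inP (q v : seq X) : Prop :=
  v <> [::] /\ prefix v q /\ prefix q (v ++ q) /\ q <> v ++ q.

Definition inP2Pstar (q v : seq X) : Prop :=
  exists ws : seq (seq X), (2 <= size ws)%N /\ (forall w, w \in ws -> inP q w)
                           /\ flatten ws = v.

Definition inRootP (q v : seq X) : Prop := inP q v /\ ~ inP2Pstar q v.

(* p_q(t) = t^|q| - sum_{v in rootP_q} t^(|q|-|v|).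
   Every v in rootP_q is a nonempty prefix of q, i.e. v = take k q with
   1 <= k <= |q|, and these prefixes are pairwise distinct. *)
Definition pq (q : seq X) (t : R) : R :=
  (t ^ size q -
   foldr Rplus 0%R
     [seq (if asb (inRootP q (take k q)) then t ^ (size q - k) else 0)%R
     | k <- iota 1 (size q)])%R.

Definition inPomega (q : seq X) (xi : oword) : Prop :=
  exists w : nat -> seq X,
    (forall i, inP q (w i)) /\
    (forall i, oprefix (flatten (mkseq w i.+1)) xi).

Definition factor_at (xi : oword) (i n : nat) : seq X :=
  mkseq (fun j => xi (i + j)) n.

Definition fcompl (xi : oword) (n : nat) : nat :=
  #|[set t : n.-tuple X | asb (exists i, factor_at xi i n = val t)]|.

End Words.

From mathcomp Require Import all_boot all_order all_algebra.
From mathcomp Require Import Rstruct ring.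

(* Enumerate all finite sequences of elements of P_q and concatenate them, each
   preceded by q, into a single factorization over P_q.  The resulting
   quasiperiodic word contains every word of P_q^* as a factor, so f(xi, n) is at
   least the number a_j of words of length j in P_q^*, for every j <= n.
   Prepending an element v of root*(P_q) to a word of P_q^* gives a word of
   P_q^*, and v is determined by the result, hence
   a_N >= sum_{v in root*(P_q), |v| <= N} a_{N-|v|}.  As lam is a root of p_q,
   sum_v lam^-|v| = 1, and for such renewal inequalities the potential
   sum_v lam^-|v| sum_{i < |v|} a_{n-i} lam^-(n-i) is nondecreasing in n, hence
   >= a_0 >= 1; so some a_j with n - |q| < j <= n is at least c lam^n. *)

Set Implicit Arguments.
Unset Strict Implicit.
Unset Printing Implicit Defensive.

Import Order.TTheory GRing.Theory Num.Theory.

Lemma asbP (P : Prop) : reflect P (asb P).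
Proof.
by rewrite /asb; case: ClassicalEpsilon.excluded_middle_informative => p; constructor.
Qed.

Lemma mkseqD (T : Type) (f : nat -> T) m n :
  mkseq f (m + n) = mkseq f m ++ mkseq (fun i => f (m + i)) n.
Proof.
rewrite /mkseq iotaD map_cat add0n; congr (_ ++ _).
by rewrite -{1}[m]addn0 iotaDl -map_comp.
Qed.

Section Concatenation.
Variables (T : eqType) (x0 : T) (b : nat -> seq T).
Hypothesis b_nonempty : forall k, 0 < size (b k).

Definition concat_prefix N := flatten (mkseq b N).
Definition concat_word i := nth x0 (concat_prefix i.+1) i.

Lemma concat_prefixD N d :
  concat_prefix (N + d) = concat_prefix N ++ flatten (mkseq (fun i => b (N + i)) d).
Proof. by rewrite /concat_prefix mkseqD flatten_cat. Qed.

Lemma concat_prefixS N : concat_prefix N.+1 = concat_prefix N ++ b N.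
Proof. by rewrite -addn1 concat_prefixD /= addn0 cats0. Qed.

Lemma size_concat_prefix N : N <= size (concat_prefix N).
Proof.
elim: N => // N IHN; rewrite concat_prefixS size_cat -addn1.
exact: leq_add IHN (b_nonempty N).
Qed.

Lemma nth_concat_prefix N N' j : N <= N' -> j < size (concat_prefix N) ->
  nth x0 (concat_prefix N') j = nth x0 (concat_prefix N) j.
Proof. by move=> /subnKC <- lt_j; rewrite concat_prefixD nth_cat lt_j. Qed.

Lemma concat_wordE N j : j < size (concat_prefix N) ->
  concat_word j = nth x0 (concat_prefix N) j.
Proof.
move=> lt_jN; have lt_jj : j < size (concat_prefix j.+1).
  exact: leq_trans (size_concat_prefix j.+1).
rewrite /concat_word -(nth_concat_prefix (leq_maxr N j.+1)) //.
exact: nth_concat_prefix (leq_maxl N j.+1) lt_jN.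
Qed.

Lemma concat_word_factor M u s v : concat_prefix M = u ++ s ++ v ->
  mkseq (fun i => concat_word (size u + i)) (size s) = s.
Proof.
move=> def_M; apply: (@eq_from_nth _ x0); rewrite size_mkseq // => i lt_is.
rewrite nth_mkseq // (@concat_wordE M); last by rewrite def_M !size_cat ltn_add2l ltn_addr.
by rewrite def_M nth_cat ltnNge leq_addr /= addKn nth_cat lt_is.
Qed.

Lemma concat_word_prefix N : mkseq concat_word (size (concat_prefix N)) = concat_prefix N.
Proof.
have := @concat_word_factor N [::] (concat_prefix N) [::].
by rewrite cats0 => /(_ erefl); under eq_mkseq do rewrite add0n.
Qed.

Lemma concat_word_ind (P : T -> Prop) :
  P x0 -> (forall k, {in b k, forall x, P x}) -> forall i, P (concat_word i).
Proof.
move=> P_x0 P_b i; rewrite /concat_word.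
have [lt_i|le_i] := ltnP i (size (concat_prefix i.+1)); last by rewrite nth_default.
have /flattenP[_ /mapP[k _ ->]] := mem_nth x0 lt_i; exact: P_b.
Qed.
End Concatenation.

Lemma prefix_by_size (T : eqType) (s1 s2 s : seq T) :
  prefix s1 s -> prefix s2 s -> size s1 <= size s2 -> prefix s1 s2.
Proof.
rewrite !prefixE => /eqP def_s1 /eqP def_s2 le_12.
by rewrite -def_s2 take_takel // def_s1.
Qed.

Section Quasiperiods.
Variables (X : finType) (q : seq X).

Definition inPstar (y : seq X) : Prop :=
  exists2 ws : seq (seq X), {in ws, forall w, inP q w} & flatten ws = y.

Lemma inP_self : q <> [::] -> inP q q.
Proof.
move=> q_neq0; split=> //; split; first exact: prefix_refl.
split; first exact: prefix_prefix.
move=> /(congr1 size) /eqP; rewrite size_cat -{1}[size q]add0n eqn_add2r.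
by case: (q) q_neq0.
Qed.

Lemma size_inP v : inP q v -> 0 < size v <= size q.
Proof. by case=> v_neq0 [/size_prefix-> _]; rewrite andbT; case: (v) v_neq0. Qed.

Lemma take_inP v : inP q v -> take (size v) q = v.
Proof. by case=> _ [/prefixP[s ->] _]; rewrite take_size_cat. Qed.

Lemma inPstar_nil : inPstar [::].
Proof. by exists [::]. Qed.

Lemma inPstar_cat y z : inPstar y -> inPstar z -> inPstar (y ++ z).
Proof.
move=> [ws ws_P <-] [ws' ws'_P <-]; exists (ws ++ ws'); last exact: flatten_cat.
by move=> w; rewrite mem_cat => /orP[]; [apply: ws_P | apply: ws'_P].
Qed.

Lemma inPstar_cons v y : inP q v -> inPstar y -> inPstar (v ++ y).
Proof.
by move=> v_P; apply: inPstar_cat; exists [:: v]; rewrite /= ?cats0 // => w /[!inE] /eqP->.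
Qed.

Lemma inPstar_nseq n : q <> [::] -> inPstar (flatten (nseq n q)).
Proof. by move=> q_neq0; exists (nseq n q) => // w /nseqP[-> _]; apply: inP_self. Qed.

Lemma prefix_inPstar y : inPstar y -> prefix q (y ++ q).
Proof.
move=> [ws ws_P <-]; elim: ws ws_P => [|w ws IHws] ws_P /=; first exact: prefix_refl.
have [_ [_ [/prefixP[s def_wq] _]]] := ws_P w (mem_head _ _).
have /prefixP[s' def_q] : prefix q (flatten ws ++ q).
  by apply: IHws => w' w'_ws; apply: ws_P; rewrite inE w'_ws orbT.
by apply/prefixP; exists (s ++ s'); rewrite -catA def_q catA -def_wq catA.
Qed.

Lemma inRootP_head_size v v' y y' : inP q v -> inRootP q v' ->
  inPstar y -> inPstar y' -> v ++ y = v' ++ y' -> size v' <= size v.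
Proof.
move=> v_P [v'_P v'_root] y_P y'_P def_y; rewrite leqNgt; apply/negP => lt_vv'.
have /andP[_ le_v'q] := size_inP v'_P.
have /prefixP[x def_v'] : prefix v v'.
  by case: v_P v'_P => _ [v_q _] [_ [v'_q _]]; apply: prefix_by_size v_q v'_q (ltnW lt_vv').
have x_neq0 : x <> [::] by move=> x0; move: lt_vv'; rewrite def_v' x0 cats0 ltnn.
have def_y' : y = x ++ y'.
  by move/(congr1 (drop (size v))): def_y; rewrite def_v' -catA !drop_size_cat.
have xq_yq : prefix (x ++ q) (y ++ q).
  have /prefixP[s def_q] := prefix_inPstar y'_P.
  by apply/prefixP; exists s; rewrite def_y' -!catA def_q.
have x_P : inP q x.
  have q_yq := prefix_inPstar y_P; have x_yq := catl_prefix xq_yq.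
  do !split => //.
  - apply: prefix_by_size x_yq q_yq _.
    by apply: leq_trans le_v'q; rewrite def_v' size_cat leq_addl.
  - by apply: prefix_by_size q_yq xq_yq _; rewrite size_cat leq_addl.
  - move=> /(congr1 size) /eqP; rewrite size_cat -{1}[size q]add0n eqn_add2r.
    by case: (x) x_neq0.
apply: v'_root; exists [:: v; x]; split=> //; split; last by rewrite /= cats0 def_v'.
by move=> w /[!inE] /orP[] /eqP->.
Qed.

Lemma inRootP_cat_inj v v' y y' : inRootP q v -> inRootP q v' ->
  inPstar y -> inPstar y' -> v ++ y = v' ++ y' -> v = v'.
Proof.
move=> v_root v'_root y_P y'_P def_y.
have le_v'v := inRootP_head_size v_root.1 v'_root y_P y'_P def_y.
have le_vv' := inRootP_head_size v'_root.1 v_root y'_P y_P (esym def_y).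
rewrite -(take_inP v_root.1) -(take_inP v'_root.1); congr (take _ q).
by apply/eqP; rewrite eqn_leq le_vv'.
Qed.
End Quasiperiods.

Lemma card_bigcup_seq (T : finType) (I : eqType) (r : seq I) (A : I -> {set T}) :
  uniq r -> {in r &, forall i j, i != j -> [disjoint A i & A j]} ->
  #|\bigcup_(i <- r) A i| = \sum_(i <- r) #|A i|.
Proof.
elim: r => [|i r IHr] /=; first by rewrite !big_nil cards0.
move=> /andP[i_r uniq_r] disjA.
have disjA_r : {in r &, forall j k, j != k -> [disjoint A j & A k]}.
  by move=> j k j_r k_r; apply: disjA; rewrite inE ?j_r ?k_r orbT.
rewrite !big_cons -IHr // cardsU disjoint_setI0 ?cards0 ?subn0 //.
rewrite big_seq; elim/big_ind: _ => [|S S'|j j_r].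
- by rewrite disjoints_subset setC0 subsetT.
- by rewrite !disjoints_subset setCU subsetI => -> ->.
- by apply: disjA; rewrite ?inE ?eqxx ?j_r ?orbT //; apply: contraNneq i_r => ->.
Qed.

Lemma factor_at_take (X : finType) (xi : oword X) i n L :
  n <= L -> take n (factor_at xi i L) = factor_at xi i n.
Proof. by move=> /subnKC <-; rewrite /factor_at mkseqD take_size_cat ?size_mkseq. Qed.

Section PstarWords.
Variables (X : finType) (q : seq X) (x0 : X).
Hypothesis q_neq0 : q <> [::].

Definition Pstar_words n : {set n.-tuple X} := [set t : n.-tuple X | asb (inPstar q t)].

Definition root_lengths := [seq k <- iota 1 (size q) | asb (inRootP q (take k q))].

Lemma mem_root_lengths k :
  k \in root_lengths -> 0 < k <= size q /\ inRootP q (take k q).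
Proof. by rewrite mem_filter mem_iota add1n ltnS => /andP[/asbP]. Qed.

Definition prepend_root k n (y : (n - k).-tuple X) : n.-tuple X :=
  insubd (nseq_tuple n x0) (take k q ++ y).

Lemma val_prepend_root k n (y : (n - k).-tuple X) : k <= n -> k <= size q ->
  val (prepend_root y) = take k q ++ y.
Proof.
move=> le_kn le_kq; rewrite val_insubd size_cat size_tuple size_takel //.
by rewrite subnKC // eqxx.
Qed.

Lemma Pstar_words_renewal N :
  \sum_(k <- root_lengths | k <= N) #|Pstar_words (N - k)| <= #|Pstar_words N|.
Proof.
rewrite -big_filter; set ks := filter _ _.
have ks_spec k : k \in ks -> [/\ k <= N, k <= size q & inRootP q (take k q)].
  by rewrite mem_filter => /andP[le_kN /mem_root_lengths[/andP[_ le_kq] root_k]].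
pose img k := [set @prepend_root k N y | y in Pstar_words (N - k)].
rewrite (eq_big_seq (fun k => #|img k|)) => [|k /ks_spec[le_kN le_kq _]]; last first.
  rewrite card_imset // => y y' /(congr1 val); rewrite !val_prepend_root //.
  by move/(congr1 (drop k)); rewrite !drop_size_cat ?size_takel // => /val_inj.
rewrite -card_bigcup_seq.
- apply/subset_leq_card; rewrite big_seq; elim/big_ind: _ => [|S S' ? ?|k].
  + exact: sub0set.
  + by rewrite subUset; apply/andP.
  move=> /ks_spec[le_kN le_kq root_k].
  apply/subsetP => _ /imsetP[y /[!inE] /asbP y_P ->].
  by apply/asbP; rewrite val_prepend_root //; apply: inPstar_cons root_k.1 y_P.
- by rewrite !filter_uniq ?iota_uniq.
move=> k k' /ks_spec[le_kN le_kq root_k] /ks_spec[le_k'N le_k'q root_k'] neq_kk'.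
rewrite -setI_eq0 -subset0; apply/subsetP => _ /setIP[/imsetP[y /[!inE] /asbP y_P ->]].
case/imsetP=> y' /[!inE] /asbP y'_P /(congr1 val); rewrite !val_prepend_root //.
move=> /(inRootP_cat_inj root_k root_k' y_P y'_P).
by move/(congr1 size); rewrite !size_takel // => /eqP; rewrite (negPf neq_kk').
Qed.

Lemma Pstar_words0_gt0 : 0 < #|Pstar_words 0|.
Proof. by apply/card_gt0P; exists [tuple]; rewrite inE; apply/asbP/inPstar_nil. Qed.

Lemma Pstar_words_le_fcompl (xi : oword X) :
  (forall y, inPstar q y -> exists i, factor_at xi i (size y) = y) ->
  forall j n, j <= n -> #|Pstar_words j| <= fcompl xi n.
Proof.
move=> xi_factors j n le_jn.
pose pad (t : j.-tuple X) := take n (t ++ flatten (nseq n q)).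
have le_n_padded (t : j.-tuple X) : n <= size (t ++ flatten (nseq n q)).
  rewrite size_cat size_flatten /shape map_nseq sumn_nseq.
  by apply: leq_trans (leq_addl _ _); rewrite leq_pmull //; case: (q) q_neq0.
have size_pad t : size (pad t) = n by rewrite size_takel.
rewrite -(card_imset _ (f := fun t => insubd (nseq_tuple n x0) (pad t) : n.-tuple X)).
  apply/subset_leq_card/subsetP => _ /imsetP[t /[!inE] /asbP t_P ->]; apply/asbP.
  have [i def_t] := xi_factors _ (inPstar_cat t_P (inPstar_nseq n q_neq0)).
  by exists i; rewrite val_insubd size_pad eqxx /pad -def_t factor_at_take.
move=> t t' /(congr1 val); rewrite !val_insubd !size_pad eqxx /pad => /(congr1 (take j)).
by rewrite !take_takel // !take_size_cat ?size_tuple // => /val_inj.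
Qed.
End PstarWords.

Section UniversalWord.
Variables (X : finType) (q : seq X) (x0 : X).
Hypothesis q_neq0 : q <> [::].

(* Block N lists q followed by the N-th finite sequence of elements of P_q,
   each v being coded by |v| - 1; the leading q keeps blocks nonempty. *)
Definition P_code k := if asb (inP q (take k.+1 q)) then take k.+1 q else q.

Definition P_block N : seq (seq X) := q :: map P_code (CodeSeq.decode N).

Definition P_factorization : nat -> seq X := concat_word q P_block.

Definition universal_word : oword X := concat_word x0 P_factorization.

Lemma P_code_inP k : inP q (P_code k).
Proof. by rewrite /P_code; case: asbP => // _; apply: inP_self. Qed.

Lemma P_codeK v : inP q v -> P_code (size v).-1 = v.
Proof.
move=> v_P; have /andP[v_gt0 _] := size_inP v_P.
by rewrite /P_code prednK // take_inP //; case: asbP.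
Qed.

Lemma P_factorization_inP i : inP q (P_factorization i).
Proof.
apply: concat_word_ind; first exact: inP_self.
by move=> N v /[!inE] /predU1P[-> | /mapP[k _ ->]]; [apply: inP_self | apply: P_code_inP].
Qed.

Lemma size_P_factorization i : 0 < size (P_factorization i).
Proof. by have /andP[] := size_inP (P_factorization_inP i). Qed.

Lemma universal_word_quasiperiodic : inPomega q universal_word.
Proof.
exists P_factorization; split=> [|i]; first exact: P_factorization_inP.
by rewrite /oprefix -/(concat_prefix _ _) concat_word_prefix //; apply: size_P_factorization.
Qed.

Lemma universal_word_factor y :
  inPstar q y -> exists i, factor_at universal_word i (size y) = y.
Proof.
move=> [ws ws_P <-].
set N := CodeSeq.code [seq (size v).-1 | v <- ws].
have block_N : P_block N = q :: ws.
  rewrite /P_block /N CodeSeq.codeK -map_comp -[RHS]map_id; congr (_ :: _).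
  by apply/eq_in_map => v /ws_P /P_codeK.
set M := size (concat_prefix P_block N ++ [:: q]).
have ws_at_M : mkseq (fun i => P_factorization (M + i)) (size ws) = ws.
  apply: (@concat_word_factor _ q P_block _ N.+1 _ _ [::]) => //.
  by rewrite concat_prefixS block_N cats0 -catA.
exists (size (concat_prefix P_factorization M)).
apply: (@concat_word_factor _ x0 _ size_P_factorization (M + size ws) _ _ [::]).
by rewrite cats0 concat_prefixD ws_at_M.
Qed.
End UniversalWord.

Local Open Scope ring_scope.

Lemma sum_ge1_witness (R : realFieldType) (m : nat) (P : pred nat) (F : nat -> R) :
  1 <= \sum_(0 <= i < m | P i) F i -> exists2 i, (i < m)%N && P i & 1 <= m%:R * F i.
Proof.
move=> sum_ge1.
pose large i := P i && (1 <= m%:R * F i).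
have [/hasP[i]|/hasPn small] := boolP (has large (index_iota 0 m)).
  by rewrite mem_index_iota => /andP[_ lt_im] /andP[Pi le1]; exists i; rewrite ?lt_im.
have [hasP_m|] := boolP (has P (index_iota 0 m)); last first.
  by move=> noP; move: sum_ge1; rewrite big_hasC // ler10.
suff : m%:R * \sum_(0 <= i < m | P i) F i < m%:R.
  by rewrite ltNge ler_peMr ?sum_ge1 // ler0n.
rewrite mulr_sumr big_seq_cond.
apply: (lt_le_trans (ltr_sum (G := fun=> 1) _ _)).
- by have [i r_i Pi] := hasP hasP_m; apply/hasP; exists i; rewrite ?r_i.
- by move=> i /andP[r_i Pi]; have := small i r_i; rewrite /large Pi -ltNge.
rewrite -big_seq_cond.
have -> : m%:R = \sum_(0 <= i < m) 1 :> R by rewrite sumr_const_nat subn0.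
rewrite big_mkcond.
by apply: ler_sum_nat => i _; case: (P i).
Qed.

Section RenewalGrowth.
Variables (R : realFieldType) (lam : R) (m : nat) (ks : seq nat) (a : nat -> nat).
Hypotheses (lam_gt0 : 0 < lam) (ks_range : {in ks, forall k : nat, (0 < k <= m)%N})
  (ks_weights : \sum_(k <- ks) lam ^- k = 1)
  (a_renewal : forall N, (\sum_(k <- ks | k <= N) a (N - k) <= a N)%N)
  (a0_gt0 : (0 < a 0)%N).

Let b j : R := (a j)%:R / lam ^+ j.
Let window n k := \sum_(0 <= i < k | (i <= n)%N) b (n - i).
Let potential n := \sum_(k <- ks) lam ^- k * window n k.

Lemma b_ge0 j : 0 <= b j.
Proof. by rewrite divr_ge0 // exprn_ge0 // ltW. Qed.

Lemma windowSr n k : window n k.+1 = window n k + (if (k <= n)%N then b (n - k) else 0).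
Proof. by rewrite /window big_mkcond big_nat_recr //= -big_mkcond. Qed.

Lemma windowS n k :
  window n.+1 k = b n.+1 + window n k - (if (k <= n.+1)%N then b (n.+1 - k) else 0).
Proof.
elim: k => [|k IHk]; first by rewrite /window !big_geq // subn0 addr0 subrr.
by rewrite !windowSr IHk ltnS subSS subrK addrA addrK.
Qed.

Lemma weighted_renewal N : \sum_(k <- ks | (k <= N)%N) lam ^- k * b (N - k) <= b N.
Proof.
have lamX_neq0 j : lam ^+ j != 0 by rewrite expf_neq0 // gt_eqF.
rewrite (eq_bigr (fun k => (a (N - k))%:R / lam ^+ N)); last first.
  move=> k le_kN; have -> : lam ^+ N = lam ^+ k * lam ^+ (N - k) by rewrite -exprD subnKC.
  by rewrite /b; field; rewrite !lamX_neq0.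
by rewrite -mulr_suml -natr_sum ler_pM2r ?invr_gt0 ?exprn_gt0 // ler_nat.
Qed.

Lemma window0 k : window 0 k.+1 = b 0.
Proof.
elim: k => [|k IHk]; last by rewrite windowSr IHk addr0.
by rewrite windowSr /window big_geq // add0r.
Qed.

Lemma window_mono n k k' : (k <= k')%N -> window n k <= window n k'.
Proof.
move=> /subnKC <-; elim: (k' - k)%N => [|d IHd]; first by rewrite addn0.
by rewrite addnS windowSr ler_wpDr //; case: ifP => // _; apply: b_ge0.
Qed.

Lemma potential_nondecr n : potential n <= potential n.+1.
Proof.
rewrite -subr_ge0 /potential -sumrB.
under eq_bigr do rewrite -mulrBr windowS addrAC addrK mulrBr.
rewrite sumrB -mulr_suml ks_weights mul1r subr_ge0.
rewrite (eq_bigr (fun k => if (k <= n.+1)%N then lam ^- k * b (n.+1 - k) else 0)).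
  by rewrite -big_mkcond weighted_renewal.
by move=> k _; case: ifP; rewrite ?mulr0.
Qed.

Lemma potential_ge1 n : 1 <= potential n.
Proof.
elim: n => [|n IHn]; last exact: le_trans (potential_nondecr n).
rewrite /potential big_seq (eq_bigr (fun k => lam ^- k * b 0)); last first.
  by move=> k /ks_range /andP[k_gt0 _]; rewrite -(prednK k_gt0) window0.
by rewrite -big_seq -mulr_suml ks_weights mul1r /b expr0 divr1 ler1n.
Qed.

Lemma potential_le_window n : potential n <= window n m.
Proof.
rewrite -[leRHS]mul1r -ks_weights mulr_suml [leLHS]big_seq [leRHS]big_seq.
apply: ler_sum => k /ks_range /andP[_ le_km].
by apply: ler_wpM2l; [rewrite invr_ge0 exprn_ge0 // ltW | exact: window_mono].
Qed.

Theorem renewal_growth :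
  exists2 c, 0 < c & forall n, exists2 j, (j <= n)%N & c * lam ^+ n <= (a j)%:R.
Proof.
have large_term n : exists2 i, (i < m)%N && (i <= n)%N & 1 <= m%:R * b (n - i).
  exact/sum_ge1_witness/(le_trans (potential_ge1 n))/potential_le_window.
have [i0 /andP[lt_i0m _] _] := large_term 0%N.
have lam_ge0 := ltW lam_gt0.
have lam1_ge1 : 1 <= 1 + lam by rewrite lerDl.
have C_gt0 : 0 < m%:R * (1 + lam) ^+ m.
  by rewrite mulr_gt0 ?ltr0n ?(leq_ltn_trans _ lt_i0m) // exprn_gt0 // (lt_le_trans ltr01).
exists (m%:R * (1 + lam) ^+ m)^-1; first by rewrite invr_gt0.
move=> n; have [i /andP[lt_im le_in] b_large] := large_term n.
exists (n - i)%N; first exact: leq_subr.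
have lamXni_le : lam ^+ (n - i) <= m%:R * (a (n - i))%:R.
  by move: b_large; rewrite /b mulrA ler_pdivlMr ?mul1r // exprn_gt0.
have lamXi_le : lam ^+ i <= (1 + lam) ^+ m.
  apply: le_trans (ler_weXn2l lam1_ge1 (ltnW lt_im)).
  by rewrite lerXn2r ?nnegrE ?lerDr // addr_ge0.
have -> : lam ^+ n = lam ^+ (n - i) * lam ^+ i by rewrite -exprD subnK.
rewrite ler_pdivrMl //; apply: le_trans (ler_pM _ _ lamXni_le lamXi_le) _.
  1,2: exact: exprn_ge0.
by rewrite mulrAC mulrC.
Qed.
End RenewalGrowth.

(* Imported last so that [%R] denotes the scope of the Stdlib reals again. *)
From Stdlib Require Import Reals.

Lemma root_weights (X : finType) (q : seq X) (lam : R) :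
  0 < lam -> pq q lam = 0 -> \sum_(k <- root_lengths q) lam ^- k = 1.
Proof.
move=> lam_gt0; rewrite /pq big_filter.
have foldr_sum (s : seq R) : foldr Rplus 0 s = \sum_(x <- s) x.
  by elim: s => [|x s IHs]; rewrite ?big_nil ?big_cons //= IHs.
rewrite foldr_sum big_map RminusE RpowE -big_mkcond big_seq_cond.
under eq_bigr => k /andP[/[!(mem_iota, add1n, ltnS)] /andP[_ le_kq] _].
  rewrite RpowE exprB ?unitfE ?lt0r_neq0 //.
  over.
rewrite -big_seq_cond -mulr_sumr => /eqP; rewrite subr_eq0 -{1}[lam ^+ _]mulr1 => /eqP.
by move/(mulfI (expf_neq0 _ (lt0r_neq0 lam_gt0)))->.
Qed.

Local Close Scope ring_scope.

Theorem lemma7 (X : finType) (hX : (1 < #|X|)%N) (q : seq X) (hq : q <> [::])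
  (lam : R)
  (hlam_pos : (0 < lam)%R) (hlam_root : pq q lam = 0%R)
  (hlam_max : forall t : R, (0 < t)%R -> pq q t = 0%R -> (t <= lam)%R) :
  exists c : R, (0 < c)%R /\
    exists xi : oword X, inPomega q xi /\
      forall n : nat, (c * lam ^ n <= INR (fcompl xi n))%R.
Proof.
have [x0 _] : exists x0 : X, x0 \in q.
  by case: (q) hq => [//|x s] _; exists x; rewrite mem_head.
have /RltP lam_gt0 := hlam_pos.
have root_range k : k \in root_lengths q -> 0 < k <= size q by case/mem_root_lengths.
have [c c_gt0 growth] := renewal_growth lam_gt0 root_range (root_weights lam_gt0 hlam_root)
  (Pstar_words_renewal q x0) (Pstar_words0_gt0 q).
exists c; split; first exact/RltP.
exists (universal_word q x0); split; first exact: universal_word_quasiperiodic.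
move=> n; have [j le_jn c_le] := growth n; apply/RleP; rewrite RmultE RpowE INRE.
apply: le_trans c_le _; rewrite ler_nat.
exact: Pstar_words_le_fcompl x0 hq _ (universal_word_factor x0 hq) _ _ le_jn.
Qed.
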